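(* Let $\gamma>0$, $v\in[0,1]^N$ and $r\in[0,1]^N$, and let $$q\in\arg\max_{\rho\in\Delta(\mathcal{S})}\;\mathbb{E}_{S\sim\rho}[R(S,v,r)]-\frac{(K+1)^4}{\gamma}\sum_{i=1}^N\log\frac{1}{w_i(\rho)}.$$ Then $$\max_{S^\star\in\mathcal{S}}R(S^\star,v,r)-\mathbb{E}_{S\sim q}[R(S,v,r)]\le\frac{N(K+1)^4}{\gamma},$$ and for every $S\in\mathcal{S}$, $$\sum_{i\in S}\frac{1}{w_i(q)}\le N+\frac{\gamma}{(K+1)^4}\Big(\max_{S^\star\in\mathcal{S}}R(S^\star,v,r)-R(S,v,r)\Big).$$
   Context: $N\ge K\ge1$ are integers and $\mathcal{S}$ is the collection of subsets $S\subseteq[N]$ with $1\le|S|\le K$; $\Delta(\mathcal{S})$ is the set of probability distributions on $\mathcal{S}$. For $S\in\mathcal{S}$, $v,r\in[0,1]^N$, $R(S,v,r)=\frac{\sum_{i\in S}r_iv_i}{1+\sum_{i\in S}v_i}$. For $\rho\in\Delta(\mathcal{S})$, $w_i(\rho)=\sum_{S\in\mathcal{S}:\,i\in S}\rho(S)$ (the probability that item $i$ belongs to a set drawn from $\rho$). *)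

From HB Require Import structures.
From mathcomp Require Import all_boot all_order all_algebra.
From mathcomp Require Import all_classical all_reals all_analysis.
Set Implicit Arguments. Unset Strict Implicit. Unset Printing Implicit Defensive.
Import Order.TTheory GRing.Theory Num.Theory.
Local Open Scope ring_scope.

Section Defs.
Variables (R : realType) (N K : nat).

Definition admissible (S : {set 'I_N}) : bool := (0 < #|S|)%N && (#|S| <= K)%N.

(* rho in \Delta(\mathcal{S}): a probability distribution on \mathcal{S},
   represented as a function on all subsets vanishing off \mathcal{S}. *)
Definition is_distr (rho : {set 'I_N} -> R) : Prop :=
  (forall S, 0 <= rho S) /\ (forall S, ~~ admissible S -> rho S = 0) /\
  \sum_(S | admissible S) rho S = 1.

Definition w (rho : {set 'I_N} -> R) (i : 'I_N) : R :=
  \sum_(S | admissible S && (i \in S)) rho S.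

Definition Rev (S : {set 'I_N}) (v r : 'I_N -> R) : R :=
  (\sum_(i in S) r i * v i) / (1 + \sum_(i in S) v i).

Definition ERev (rho : {set 'I_N} -> R) (v r : 'I_N -> R) : R :=
  \sum_(S | admissible S) rho S * Rev S v r.

(* max_{S* in \mathcal{S}} R(S*, v, r)  (revenues are >= 0 and \mathcal{S} is
   nonempty, so the neutral element 0 is harmless) *)
Definition maxRev (v r : 'I_N -> R) : R :=
  \big[Num.max/0]_(S | admissible S) Rev S v r.

Definition obj (gamma : R) (rho : {set 'I_N} -> R) (v r : 'I_N -> R) : R :=
  ERev rho v r - ((K.+1)%:R ^+ 4 / gamma) * \sum_(i < N) ln ((w rho i)^-1).

(* The objective
   equals -infinity when some w_i(rho) = 0, so a maximizer has all w_i > 0 and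
   it suffices to compare against distributions with all w_i > 0. *)
Definition is_argmax (gamma : R) (q : {set 'I_N} -> R) (v r : 'I_N -> R) : Prop :=
  is_distr q /\ (forall i, 0 < w q i) /\
  forall rho, is_distr rho -> (forall i, 0 < w rho i) ->
    obj gamma rho v r <= obj gamma q v r.

End Defs.

From HB Require Import structures.
From mathcomp Require Import all_boot all_order all_algebra.
From mathcomp Require Import all_classical all_reals all_analysis.
From mathcomp Require Import ring lra.
Set Implicit Arguments. Unset Strict Implicit. Unset Printing Implicit Defensive.
Import Order.TTheory GRing.Theory Num.Theory.
Local Open Scope ring_scope.

(* Moving a mass t from the maximizer q to the point mass on an admissible S
   cannot increase the objective.  Since ln (1 + u) >= u - 2 u^2 for
   u >= -1/2, this move increases sum_i ln w_i by at least
   t * (sum_(i in S) 1 / w_i(q) - N) - O(t^2), and letting t -> 0 gives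
     R(S) - E_q[R] + (K+1)^4/gamma * (sum_(i in S) 1 / w_i(q) - N) <= 0.
   Both claims follow, using E_q[R] <= max R and 1 / w_i(q) > 0. *)

Lemma ln1D_ge_sub_sqr (R : realType) (u : R) :
  -1/2 <= u -> u - 2 * u ^+ 2 <= ln (1 + u).
Proof.
move=> hu; have hu1 : 0 < 1 + u by lra.
set z := (1 + u)^-1.
have hz0 : 0 < z by rewrite invr_gt0.
have hzu : z * (1 + u) = 1 by rewrite mulVf // gt_eqF.
have ln_ge : 1 - z <= ln (1 + u).
  have := @le_ln1Dx R (z - 1); rewrite addrCA subrr addr0.
  by have := @lnV R (1 + u); rewrite posrE => -> //; move/(_ ltac:(lra)); lra.
apply: le_trans ln_ge.
have : (u - 2 * u ^+ 2 - (1 - z)) * (1 + u) = - (u ^+ 2 * (1 + 2 * u)).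
  have e : (1 - z) * (1 + u) = u by rewrite mulrBl mul1r hzu; ring.
  by rewrite [LHS](mulrBl (1 + u)) e; ring.
have : 0 <= u ^+ 2 * (1 + 2 * u) by apply: mulr_ge0; [exact: sqr_ge0 | lra].
nra.
Qed.

Lemma ln_mix_sub_ge (R : realType) (w s t : R) :
  0 < w -> 0 <= s -> 0 < t -> t <= 1/2 ->
  t * ((s - w) / w) - t ^+ 2 * (2 * ((s - w) / w) ^+ 2)
    <= ln ((1 - t) * w + t * s) - ln w.
Proof.
move=> hw hs ht ht2; set a := (s - w) / w.
have ha : -1 <= a.
  rewrite /a mulrBl divff ?gt_eqF //.
  have : 0 <= s / w by apply: divr_ge0 => //; apply: ltW.
  lra.
have hu : -1/2 <= t * a by nra.
have -> : (1 - t) * w + t * s = w * (1 + t * a) by rewrite /a; field; rewrite gt_eqF.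
rewrite lnM ?posrE //; last lra.
have -> : t ^+ 2 * (2 * a ^+ 2) = 2 * (t * a) ^+ 2 by ring.
by rewrite [ln w + _]addrC addrK; apply: ln1D_ge_sub_sqr.
Qed.

Lemma le0_of_le_small_multiples (R : realFieldType) (x M : R) :
  (forall t, 0 < t -> t <= 1/2 -> x <= t * M) -> x <= 0.
Proof.
move=> h; rewrite leNgt; apply/negP => hx.
have [hM | hM] := lerP M 0.
  by have := h (1/2) ltac:(lra) ltac:(lra); nra.
set t := x / (2 * (M + x)).
have ht : t * (2 * (M + x)) = x by rewrite /t; field; lra.
have t0 : 0 < t by rewrite /t; apply: divr_gt0; lra.
have := h t t0 ltac:(nra); nra.
Qed.

Lemma sum_ln_inv (R : realType) (I : finType) (f : I -> R) :
  (forall i, 0 < f i) -> \sum_i ln (f i)^-1 = - \sum_i ln (f i).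
Proof.
move=> hf; rewrite -sumrN; apply: eq_bigr => i _.
by rewrite lnV // posrE.
Qed.

Lemma sum_indicator_mul {R : pzRingType} {T : finType} (P : pred T) (S : T) (F : T -> R) :
  \sum_(S' | P S') (S' == S)%:R * F S' = if P S then F S else 0.
Proof.
rewrite big_mkcond (bigD1 S) //= eqxx mul1r big1 ?addr0 //.
by move=> S' /negbTE ->; rewrite mul0r; case: (P S').
Qed.

Section Distributions.
Variables (R : realType) (N K : nat).

Definition dirac (S : {set 'I_N}) : {set 'I_N} -> R := fun S' => (S' == S)%:R.

Definition mix (t : R) (rho rho' : {set 'I_N} -> R) : {set 'I_N} -> R :=
  fun S => (1 - t) * rho S + t * rho' S.

Lemma sum_dirac (P : pred {set 'I_N}) S :
  \sum_(S' | P S') dirac S S' = if P S then 1 else 0.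
Proof.
by rewrite -(sum_indicator_mul P S (fun _ => 1)); apply: eq_bigr => ? _; rewrite mulr1.
Qed.

Lemma is_distr_dirac S : admissible K S -> is_distr K (dirac S).
Proof.
move=> hS; split; [|split].
- by move=> S'; rewrite /dirac ler0n.
- by move=> S' hS'; rewrite /dirac; case: eqP => // eS; rewrite eS hS in hS'.
- by rewrite sum_dirac hS.
Qed.

Lemma is_distr_mix t rho rho' : 0 <= t <= 1 ->
  is_distr K rho -> is_distr K rho' -> is_distr K (mix t rho rho').
Proof.
move=> /andP[t0 t1] [r0 [rn rs]] [r0' [rn' rs']]; split; [|split].
- by move=> S; rewrite /mix; apply: addr_ge0; apply: mulr_ge0 => //; lra.
- by move=> S hS; rewrite /mix rn // rn' // !mulr0 addr0.
- by rewrite /mix big_split /= -!mulr_sumr rs rs'; lra.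
Qed.

Lemma w_dirac S i : admissible K S -> w K (dirac S) i = (i \in S)%:R.
Proof.
move=> hS; rewrite /w (sum_dirac (fun S' => admissible K S' && (i \in S'))) hS /=.
by case: (i \in S).
Qed.

Lemma w_mix t rho rho' i :
  w K (mix t rho rho') i = (1 - t) * w K rho i + t * w K rho' i.
Proof. by rewrite /w /mix big_split /= -!mulr_sumr. Qed.

Lemma ERev_dirac S v r : admissible K S -> ERev K (dirac S) v r = Rev S v r.
Proof. by move=> hS; rewrite /ERev sum_indicator_mul hS. Qed.

Lemma ERev_mix t rho rho' v r :
  ERev K (mix t rho rho') v r = (1 - t) * ERev K rho v r + t * ERev K rho' v r.
Proof.
rewrite /ERev /mix; under eq_bigr do rewrite mulrDl -!mulrA.
by rewrite big_split /= -!mulr_sumr.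
Qed.

Lemma obj_eq (gamma : R) (rho : {set 'I_N} -> R) (v r : 'I_N -> R) :
  (forall i, 0 < w K rho i) ->
  obj K gamma rho v r
    = ERev K rho v r + (K.+1)%:R ^+ 4 / gamma * \sum_(i < N) ln (w K rho i).
Proof. by move=> hw; rewrite /obj sum_ln_inv // mulrN opprK. Qed.

Lemma Rev_ge0 S (v r : 'I_N -> R) :
  (forall i, 0 <= v i <= 1) -> (forall i, 0 <= r i <= 1) -> 0 <= Rev S v r.
Proof.
move=> hv hr; apply: divr_ge0.
  by apply: sumr_ge0 => i _; apply: mulr_ge0; [case/andP: (hr i) | case/andP: (hv i)].
by apply: addr_ge0 => //; apply: sumr_ge0 => i _; case/andP: (hv i).
Qed.

Lemma ERev_le_maxRev rho (v r : 'I_N -> R) :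
  is_distr K rho -> (forall S, 0 <= Rev S v r) -> ERev K rho v r <= maxRev K v r.
Proof.
move=> [r0 [_ rs]] hR.
apply: (@le_trans _ _ (\sum_(S | admissible K S) rho S * maxRev K v r)).
  by apply: ler_sum => S hS; apply: ler_wpM2l => //; exact: le_bigmax_cond.
by rewrite -mulr_suml rs mul1r.
Qed.

End Distributions.

Arguments dirac {R N}.
Arguments mix {R N}.

Section FirstOrderCondition.
Variables (R : realType) (N K : nat) (gamma : R) (v r : 'I_N -> R).
Variable q : {set 'I_N} -> R.
Hypotheses (hg : 0 < gamma) (hq : is_argmax K gamma q v r).

Let c : R := (K.+1)%:R ^+ 4 / gamma.

Let c_gt0 : 0 < c.
Proof. by rewrite /c divr_gt0 // exprn_gt0 // ltr0n. Qed.

Lemma sum_relative_gap (S : {set 'I_N}) :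
  \sum_(i < N) (((i \in S)%:R - w K q i) / w K q i)
    = \sum_(i in S) (w K q i)^-1 - N%:R.
Proof.
have [_ [wq _]] := hq.
under eq_bigr => i _ do rewrite mulrBl divff ?gt_eqF //.
rewrite sumrB sumr_const card_ord [in RHS]big_mkcond; congr (_ - _).
by apply: eq_bigr => i _; case: (i \in S); rewrite ?mul1r ?mul0r.
Qed.

Lemma argmax_first_order S : admissible K S ->
  Rev S v r - ERev K q v r + c * (\sum_(i in S) (w K q i)^-1 - N%:R) <= 0.
Proof.
move=> hS; have [dq [wq opt]] := hq.
set E := ERev K q v r; set RS := Rev S v r.
pose a i := ((i \in S)%:R - w K q i) / w K q i.
set A := \sum_(i < N) a i; set B := \sum_(i < N) 2 * a i ^+ 2.
rewrite -sum_relative_gap -/A.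
apply: (@le0_of_le_small_multiples _ _ (c * B)) => t t0 t2.
pose rho := mix t q (dirac S).
have w_rho i : w K rho i = (1 - t) * w K q i + t * (i \in S)%:R.
  by rewrite w_mix w_dirac.
have w_rho_gt0 i : 0 < w K rho i.
  by rewrite w_rho; have := wq i; have : 0 <= (i \in S)%:R :> R := ler0n _ _; nra.
have := opt rho (is_distr_mix (ltac:(lra) : 0 <= t <= 1) dq (is_distr_dirac R hS)) w_rho_gt0.
rewrite !obj_eq // ERev_mix ERev_dirac // -/E -/RS -/c => ho.
have hl : t * A - t ^+ 2 * B
    <= \sum_(i < N) ln (w K rho i) - \sum_(i < N) ln (w K q i).
  rewrite !mulr_sumr -!sumrB; apply: ler_sum => i _.
  by rewrite w_rho; apply: ln_mix_sub_ge; rewrite ?ler0n.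
have : c * (t * A - t ^+ 2 * B)
    <= c * (\sum_(i < N) ln (w K rho i) - \sum_(i < N) ln (w K q i)).
  by apply: ler_wpM2l => //; apply: ltW.
have -> : c * (t * A - t ^+ 2 * B) = t * (c * A) - t * (t * (c * B)) by ring.
move=> hc; have : t * (RS - E + c * A - t * (c * B)) <= 0 by nra.
by rewrite pmulr_rle0 //; lra.
Qed.

Hypothesis hRev0 : forall S, 0 <= Rev S v r.

Lemma maxRev_sub_ERev_le : maxRev K v r - ERev K q v r <= N%:R * c.
Proof.
have [[q0 _] _] := hq.
have E0 : 0 <= ERev K q v r by apply: sumr_ge0 => S _; apply: mulr_ge0.
rewrite lerBlDl [N%:R * c]mulrC; apply: bigmax_le => [|S hS].
  by apply: addr_ge0 => //; apply: mulr_ge0 => //; apply: ltW.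
have [_ [wq _]] := hq.
have : 0 <= c * \sum_(i in S) (w K q i)^-1.
  by apply: mulr_ge0; [apply: ltW | apply: sumr_ge0 => i _; rewrite invr_ge0 ltW].
by have := argmax_first_order hS; rewrite mulrBr; lra.
Qed.

Lemma sum_inv_w_le S : admissible K S ->
  \sum_(i in S) (w K q i)^-1 <= N%:R + c^-1 * (maxRev K v r - Rev S v r).
Proof.
move=> hS; have [dq _] := hq.
have Emax := ERev_le_maxRev dq hRev0.
rewrite -lerBlDl -(ler_pM2l c_gt0) mulrA mulfV ?gt_eqF // mul1r.
by have := argmax_first_order hS; lra.
Qed.

End FirstOrderCondition.

Theorem lemma4 (R : realType) (N K : nat) (hK1 : (1 <= K)%N) (hKN : (K <= N)%N)
  (gamma : R) (hg : 0 < gamma) (v r : 'I_N -> R)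
  (hv : forall i, 0 <= v i <= 1) (hr : forall i, 0 <= r i <= 1)
  (q : {set 'I_N} -> R) (hq : is_argmax K gamma q v r) :
  maxRev K v r - ERev K q v r <= N%:R * (K.+1)%:R ^+ 4 / gamma /\
  forall S : {set 'I_N}, admissible K S ->
    \sum_(i in S) (w K q i)^-1
      <= N%:R + gamma / (K.+1)%:R ^+ 4 * (maxRev K v r - Rev S v r).
Proof.
have Rev0 S : 0 <= Rev S v r by exact: Rev_ge0.
split; first by rewrite -mulrA; exact: maxRev_sub_ERev_le.
by move=> S hS; rewrite -invf_div; exact: sum_inv_w_le.
Qed.
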